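(* Let $(N,\langle\,,\rangle)$ be a symplectic $L$-vector space of dimension $2n$. Let $\bar J\subset\mathbf Z/2n\mathbf Z$ be non-empty and symmetric with inverse image $J\subset\mathbf Z$, let $k\in J$ with $k+1\notin J$, let $\bar I=\bar J\cup\{\overline{k+1},\overline{-(k+1)}\}$, and let $\ell$ be the smallest element of $J$ with $\ell>k$. Let $f:X^G_{\bar I}\to X^G_{\bar J}$ be the forgetful map and let $\mathbf M=(M_i)_{i\in J}\in X^G_{\bar J}$. Then the map $(M_i)_{i\in I}\mapsto M_{k+1}$ is a bijection from $f^{-1}(\mathbf M)$ onto the set of $O_L$-lattices $M$ in $N$ with $M_k\subset M\subset M_\ell$ and $\dim_{\mathbf F}M/M_k=1$.
   Context: $L$ is the completion of the maximal unramified extension of a finite extension $F$ of $\mathbf Q_p$, $\pi$ a uniformizer of $F$, $O_L$ the integers of $L$, $\mathbf F$ its residue field. For an $O_L$-lattice $\Lambda$, $\Lambda^\perp=\{x\in N:\langle x,\Lambda\rangle\subset O_L\}$. A subset of $\mathbf Z/2n\mathbf Z$ is symmetric if stable under $x\mapsto-x$; $\bar m$ denotes the class of $m\in\mathbf Z$. For non-empty $\bar I$ with inverse image $I$, a periodic lattice chain of type $\bar I$ is a family of $O_L$-lattices $(M_i)_{i\in I}$ with $M_i\subset M_{i'}$, $\mathrm{length}(M_{i'}/M_i)=i'-i$ for $i<i'$ in $I$, and $M_{i+2n}=\pi^{-1}M_i$; it is selfdual if there is $d\in\mathbf Z$ with $M_i^\perp=M_{-i+2nd}$ for all $i\in I$.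 $X^G_{\bar I}$ denotes the set of selfdual periodic lattice chains of type $\bar I$ in $N$. *)

From HB Require Import structures.
From mathcomp Require Import all_boot all_order all_algebra.
Set Implicit Arguments.
Unset Strict Implicit.
Unset Printing Implicit Defensive.
Import Order.TTheory GRing.Theory Num.Theory.
Local Open Scope ring_scope.

(* A discrete valuation ring O inside its fraction field L, with
   uniformizer pi: O is a subring, pi is a non-unit of O, and every
   nonzero x in L is u * pi^z with u a unit of O and z an integer. *)
Record dvr (L : fieldType) := DVR {
  dvr_O : L -> Prop;
  dvr_pi : L;
  dvr_O0 : dvr_O 0;
  dvr_O1 : dvr_O 1;
  dvr_OB : forall x y, dvr_O x -> dvr_O y -> dvr_O (x - y);
  dvr_OM : forall x y, dvr_O x -> dvr_O y -> dvr_O (x * y);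
  dvr_piO : dvr_O dvr_pi;
  dvr_pi_neq0 : dvr_pi != 0;
  dvr_pi_nonunit : ~ dvr_O (dvr_pi^-1);
  dvr_fact : forall x, x != 0 ->
    exists (u : L) (z : int), [/\ dvr_O u, dvr_O u^-1 & x = u * dvr_pi ^ z]
}.

Record symplectic (L : fieldType) (N : vectType L) := Symplectic {
  sform : N -> N -> L;
  sform_linl : forall a x y z, sform (a *: x + y) z = a * sform x z + sform y z;
  sform_linr : forall a x y z, sform z (a *: x + y) = a * sform z x + sform z y;
  sform_alt : forall x, sform x x = 0;
  sform_nondeg : forall x, (forall y, sform x y = 0) -> x = 0
}.

Section Lattices.
Variables (L : fieldType) (D : dvr L) (N : vectType L) (S : symplectic N).

Definition same (A B : N -> Prop) := forall x, A x <-> B x.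
Definition lsubset (A B : N -> Prop) := forall x, A x -> B x.

Definition Osubmod (P : N -> Prop) :=
  [/\ P 0, (forall x y, P x -> P y -> P (x + y))
      & (forall a x, dvr_O D a -> P x -> P (a *: x))].

Definition Ospan (s : seq N) : N -> Prop := fun x =>
  exists a : 'I_(size s) -> L,
    (forall i, dvr_O D (a i)) /\ x = \sum_(i < size s) a i *: s`_i.

Definition is_lattice (M : N -> Prop) :=
  exists s : seq N, same M (Ospan s) /\ <<s>>%VS = fullv.

(* length(B/A) = m: a composition series A = P_0 < ... < P_m = B of
   O_L-submodules with simple successive quotients. *)
Definition has_length (A B : N -> Prop) (m : nat) :=
  exists P : nat -> N -> Prop,
    [/\ same (P 0%N) A, same (P m) B,
        (forall j, (j <= m)%N -> Osubmod (P j)) &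
        (forall j, (j < m)%N ->
           [/\ lsubset (P j) (P j.+1), ~ lsubset (P j.+1) (P j) &
               forall Q, Osubmod Q -> lsubset (P j) Q -> lsubset Q (P j.+1) ->
                 same Q (P j) \/ same Q (P j.+1)])].

(* dim_F (B/A) = 1, for A a lsubset of B: B/A is killed by pi and is spanned
   over F = O/pi by the class of one element x not in A. *)
Definition dim1 (A B : N -> Prop) :=
  lsubset (fun x => exists y, B y /\ x = dvr_pi D *: y) A /\
  exists x, [/\ B x, ~ A x &
    forall y, B y -> exists a, dvr_O D a /\ A (y - a *: x)].

Definition perp (M : N -> Prop) : N -> Prop :=
  fun x => forall y, M y -> dvr_O D (sform S x y).

(* Selfdual periodic lattice chain of type I (I a lsubset of Z, the
   inverse image of a lsubset of Z/2nZ); the family M is only relevant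
   on I. *)
Definition selfdual_chain (n : nat) (I : int -> Prop) (M : int -> N -> Prop) :=
  [/\ (forall i, I i -> is_lattice (M i)),
      (forall i i', I i -> I i' -> i < i' ->
          lsubset (M i) (M i') /\ has_length (M i) (M i') `|i' - i|%N),
      (forall i, I i -> same (M (i + (2 * n)%N%:Z)) (fun x => M i (dvr_pi D *: x)))
    & exists d : int, forall i, I i ->
          same (perp (M i)) (M (- i + (2 * n)%N%:Z * d))].

End Lattices.

(* Periodicity and self-duality leave no freedom in the fibre: a chain in it is
   determined by P = M_{k+1}, since M_{k+1+2nz} = pi^-z P and
   M_{-(k+1)+2nd+2nz} = pi^-z P^perp, the index d being already fixed by M.
   Conversely, let M_k < P <= M_l with P / M_k simple.  As P / M_k is cyclic and
   killed by pi, and M_k^perp^perp = M_k, the lattice P^perp satisfies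
   P^perp^perp = P and M_{-l+2nd} <= P^perp < M_{-k+2nd} with simple top
   quotient.  Inserting the translates of P and P^perp into M gives a selfdual
   chain; the lengths of the new steps come from cancelling a simple step at
   either end of a composition series, by the modular law. *)

From HB Require Import structures.
From mathcomp Require Import all_boot all_order all_algebra.
From mathcomp Require Import ring zify.
From Stdlib Require Import Classical.
Import Order.TTheory GRing.Theory Num.Theory.
Set Implicit Arguments.
Unset Strict Implicit.
Unset Printing Implicit Defensive.
Local Open Scope ring_scope.

Section Valuation.
Variables (L : fieldType) (D : dvr L).
Local Notation O := (dvr_O D).
Local Notation pi := (dvr_pi D).

Lemma dvr_ON x : O x -> O (- x).
Proof. by move=> Ox; have := dvr_OB (dvr_O0 D) Ox; rewrite sub0r. Qed.

Lemma dvr_OD x y : O x -> O y -> O (x + y).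
Proof. by move=> Ox Oy; have := dvr_OB Ox (dvr_ON Oy); rewrite opprK. Qed.

Lemma dvr_O_piX (m : nat) : O (pi ^+ m).
Proof.
elim: m => [|m IHm]; first by rewrite expr0; apply: dvr_O1.
by rewrite exprS; apply: dvr_OM IHm; apply: dvr_piO.
Qed.

Lemma dvr_val_ge0 u (z : int) : O u -> O u^-1 -> u != 0 -> O (u * pi ^ z) -> 0 <= z.
Proof.
move=> Ou Oui u0; case: z => [//|m] Ouz.
have pi0 := dvr_pi_neq0 D.
suff : O pi^-1 by have := @dvr_pi_nonunit _ D.
have -> : pi^-1 = (u * pi ^ Negz m) * u^-1 * pi ^+ m.
  rewrite NegzE -exprnN exprS.
  have pim0 : pi ^+ m != 0 by rewrite expf_neq0.
  by field; rewrite pim0 pi0 u0.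
by apply: dvr_OM; [apply: dvr_OM|apply: dvr_O_piX].
Qed.

Lemma dvr_unit x : O x -> ~ O (pi^-1 * x) -> O x^-1 /\ x != 0.
Proof.
move=> Ox Ox'; have x0 : x != 0.
  by apply: contra_notN Ox' => /eqP ->; rewrite mulr0; apply: dvr_O0.
split=> //; have [u [z [Ou Oui ex]]] := dvr_fact D x0.
have u0 : u != 0 by apply: contraNneq x0 => u0; rewrite ex u0 mul0r.
rewrite ex in Ox Ox' *; have := dvr_val_ge0 Ou Oui u0 Ox.
case: z {ex} Ox Ox' => [[|m]|//] _ Ox' _; first by rewrite expr0z mulr1.
exfalso; apply: Ox'; have pi0 := dvr_pi_neq0 D.
have -> : pi^-1 * (u * pi ^ m.+1%:Z) = u * pi ^+ m by rewrite -exprnP exprS; field.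
by apply: dvr_OM Ou (dvr_O_piX m).
Qed.

End Valuation.

Section Form.
Variables (L : fieldType) (N : vectType L) (S : symplectic N).
Local Notation sf := (sform S).

Lemma sformDl x y z : sf (x + y) z = sf x z + sf y z.
Proof. by have := sform_linl S 1 x y z; rewrite scale1r mul1r. Qed.

Lemma sformDr x y z : sf z (x + y) = sf z x + sf z y.
Proof. by have := sform_linr S 1 x y z; rewrite scale1r mul1r. Qed.

Lemma sform0l z : sf 0 z = 0.
Proof. by apply: (addrI (sf 0 z)); rewrite -sformDl !addr0. Qed.

Lemma sform0r z : sf z 0 = 0.
Proof. by apply: (addrI (sf z 0)); rewrite -sformDr !addr0. Qed.

Lemma sformZl a x z : sf (a *: x) z = a * sf x z.
Proof. by have := sform_linl S a x 0 z; rewrite addr0 sform0l addr0. Qed.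

Lemma sformZr a x z : sf z (a *: x) = a * sf z x.
Proof. by have := sform_linr S a x 0 z; rewrite addr0 sform0r addr0. Qed.

Lemma sformBl x y z : sf (x - y) z = sf x z - sf y z.
Proof. by rewrite sformDl -scaleN1r sformZl mulN1r. Qed.

Lemma sformC x y : sf x y = - sf y x.
Proof.
have := sform_alt S (x + y); rewrite sformDl !sformDr !sform_alt add0r addr0.
by move/eqP; rewrite addr_eq0 => /eqP.
Qed.

End Form.

Section Submodules.
Variables (L : fieldType) (D : dvr L) (N : vectType L).
Local Notation O := (dvr_O D).
Local Notation pi := (dvr_pi D).
Implicit Types (A B C P Q : N -> Prop).

Lemma same_refl A : same A A. Proof. by []. Qed.
Lemma same_sym A B : same A B -> same B A. Proof. by move=> AB x; split=> /AB. Qed.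
Lemma same_trans A B C : same A B -> same B C -> same A C.
Proof. by move=> AB BC x; split=> [/AB/BC|/BC/AB]. Qed.
Lemma same_lsubset A B : same A B -> lsubset A B. Proof. by move=> AB x /AB. Qed.
Lemma lsubset_trans A B C : lsubset A B -> lsubset B C -> lsubset A C.
Proof. by move=> AB BC x /AB/BC. Qed.
Lemma lsubset_antisym A B : lsubset A B -> lsubset B A -> same A B.
Proof. by move=> AB BA x; split=> [/AB|/BA]. Qed.

Lemma not_lsubset A B : ~ lsubset A B -> exists x, A x /\ ~ B x.
Proof.
move=> nAB; apply: NNPP => nex; apply: nAB => x Ax.
by apply: NNPP => nBx; apply: nex; exists x.
Qed.

Lemma Osubmod0 P : Osubmod D P -> P 0. Proof. by case. Qed.
Lemma OsubmodD P x y : Osubmod D P -> P x -> P y -> P (x + y).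
Proof. by case=> _ PD _; apply: PD. Qed.
Lemma OsubmodZ P a x : Osubmod D P -> O a -> P x -> P (a *: x).
Proof. by case=> _ _ PZ; apply: PZ. Qed.
Lemma OsubmodB P x y : Osubmod D P -> P x -> P y -> P (x - y).
Proof.
move=> PO Px Py; apply: OsubmodD Px _ => //; rewrite -scaleN1r.
by apply: OsubmodZ Py => //; apply/dvr_ON/dvr_O1.
Qed.

Lemma OsubmodDr P x y : Osubmod D P -> P x -> P (x + y) -> P y.
Proof. by move=> PO Px Pxy; rewrite -[y](addKr x) addrC; apply: OsubmodB. Qed.
Lemma OsubmodDl P x y : Osubmod D P -> P y -> P (x + y) -> P x.
Proof. by rewrite addrC; apply: OsubmodDr. Qed.

Lemma Osubmod_same P Q : same P Q -> Osubmod D P -> Osubmod D Q.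
Proof.
move=> PQ [P0 PD PZ]; split; first exact/PQ.
- by move=> x y /PQ Px /PQ Py; apply/PQ/PD.
- by move=> a x Oa /PQ Px; apply/PQ/PZ.
Qed.

Definition lsum A B : N -> Prop := fun x => exists a b, [/\ A a, B b & x = a + b].
Definition lcap A B : N -> Prop := fun x => A x /\ B x.

Lemma Osubmod_lsum A B : Osubmod D A -> Osubmod D B -> Osubmod D (lsum A B).
Proof.
move=> AO BO; split.
- by exists 0, 0; rewrite addr0; split=> //; apply: Osubmod0.
- move=> _ _ [a [b [Aa Bb ->]]] [a' [b' [Aa' Bb' ->]]].
  by exists (a + a'), (b + b'); rewrite addrACA; split=> //; apply: OsubmodD.
- move=> c _ Oc [a [b [Aa Bb ->]]].
  by exists (c *: a), (c *: b); rewrite scalerDr; split=> //; apply: OsubmodZ.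
Qed.

Lemma Osubmod_lcap A B : Osubmod D A -> Osubmod D B -> Osubmod D (lcap A B).
Proof.
move=> AO BO; split.
- by split; apply: Osubmod0.
- by move=> x y [Ax Bx] [Ay By]; split; apply: OsubmodD.
- by move=> c x Oc [Ax Bx]; split; apply: OsubmodZ.
Qed.

Lemma lsum_subl A B : Osubmod D B -> lsubset A (lsum A B).
Proof. by move=> BO x Ax; exists x, 0; rewrite addr0; split=> //; apply: Osubmod0. Qed.
Lemma lsum_subr A B : Osubmod D A -> lsubset B (lsum A B).
Proof. by move=> AO x Bx; exists 0, x; rewrite add0r; split=> //; apply: Osubmod0. Qed.
Lemma lsum_lub A B C : Osubmod D C -> lsubset A C -> lsubset B C -> lsubset (lsum A B) C.
Proof. by move=> CO AC BC _ [a [b [/AC Ca /BC Cb ->]]]; apply: OsubmodD. Qed.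
Lemma lsumC A B : same (lsum A B) (lsum B A).
Proof. by move=> x; split=> -[a [b [Aa Bb ->]]]; exists b, a; rewrite addrC. Qed.
Lemma lcapC A B : same (lcap A B) (lcap B A).
Proof. by move=> x; split=> -[]. Qed.

Lemma OspanE (s : seq N) x : Ospan D s x <->
  exists a : nat -> L, (forall i, O (a i)) /\ x = \sum_(i < size s) a i *: s`_i.
Proof.
split=> -[a [Oa ->]]; last by exists (fun i => a i).
exists (fun j => oapp a 0 (insub j)); split.
  by move=> j; case: (insub j) => [i|] /=; [apply: Oa|apply: dvr_O0].
by apply: eq_bigr => i _; rewrite valK.
Qed.

Lemma Ospan_nth (s : seq N) i : (i < size s)%N -> Ospan D s s`_i.
Proof.
move=> lt_i_s; apply/OspanE; exists (fun j => (j == i)%:R); split.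
  by move=> j; case: (j == i); [apply: dvr_O1|apply: dvr_O0].
rewrite (bigD1 (Ordinal lt_i_s)) //= eqxx scale1r big1 ?addr0 // => j ji.
by move: ji; rewrite -(inj_eq val_inj) /= => /negbTE ->; rewrite scale0r.
Qed.

Definition Oline (v : N) : N -> Prop := fun y => exists a, O a /\ y = a *: v.

Lemma Osubmod_Oline v : Osubmod D (Oline v).
Proof.
split.
- by exists 0; rewrite scale0r; split=> //; apply: dvr_O0.
- move=> _ _ [a [Oa ->]] [b [Ob ->]].
  by exists (a + b); rewrite scalerDl; split=> //; apply: dvr_OD.
- move=> c _ Oc [a [Oa ->]].
  by exists (c * a); rewrite scalerA; split=> //; apply: dvr_OM.
Qed.

Lemma Ospan_rcons (s : seq N) w x : Ospan D (rcons s w) x <-> lsum (Ospan D s) (Oline w) x.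
Proof.
split.
- move/OspanE=> [a [Oa ->]]; rewrite size_rcons big_ord_recr /= nth_rcons ltnn eqxx.
  exists (\sum_(i < size s) a i *: (rcons s w)`_i), (a (size s) *: w); split=> //.
  + apply/OspanE; exists a; split=> //; apply: eq_bigr => i _.
    by rewrite nth_rcons ltn_ord.
  + by exists (a (size s)).
- move=> [_ [_ [/OspanE [a [Oa ->]] [b [Ob ->]] ->]]]; apply/OspanE.
  exists (fun j => if (j < size s)%N then a j else b); split=> [j|]; first by case: ifP.
  rewrite size_rcons big_ord_recr /= ltnn nth_rcons ltnn eqxx; congr (_ + _).
  by apply: eq_bigr => i _; rewrite ltn_ord nth_rcons ltn_ord.
Qed.

Lemma Ospan_map (f : N -> N) (s : seq N) x :
  (forall a u v, f (a *: u + v) = a *: f u + f v) ->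
  Ospan D (map f s) x <-> exists y, Ospan D s y /\ x = f y.
Proof.
move=> f_lin; have f0 : f 0 = 0.
  by move: (f_lin 1 0 0); rewrite scale1r addr0 scale1r -{1}[f 0]addr0 => /addrI /esym.
have f_sum (a : nat -> L) : f (\sum_(i < size s) a i *: s`_i) = \sum_(i < size s) a i *: f s`_i.
  by apply: (big_rec2 (fun u w => f u = w)) => // i u w _ <-; rewrite f_lin.
split.
- move/OspanE=> [a [Oa ->]]; exists (\sum_(i < size s) a i *: s`_i); split.
    by apply/OspanE; exists a.
  by rewrite f_sum size_map; apply: eq_bigr => i _; rewrite (nth_map 0).
- move=> [_ [/OspanE [a [Oa ->]] ->]]; apply/OspanE; exists a; split=> //.
  by rewrite f_sum size_map; apply: eq_bigr => i _; rewrite (nth_map 0).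
Qed.

Lemma Osubmod_Ospan (s : seq N) : Osubmod D (Ospan D s).
Proof.
split.
- apply/OspanE; exists (fun _ => 0); split=> [_|]; first exact: dvr_O0.
  by rewrite big1 // => i _; rewrite scale0r.
- move=> _ _ /OspanE [a [Oa ->]] /OspanE [b [Ob ->]]; apply/OspanE.
  exists (fun i => a i + b i); split=> [i|]; first exact: dvr_OD.
  by rewrite -big_split; apply: eq_bigr => i _; rewrite scalerDl.
- move=> c _ Oc /OspanE [a [Oa ->]]; apply/OspanE.
  exists (fun i => c * a i); split=> [i|]; first exact: dvr_OM.
  by rewrite scaler_sumr; apply: eq_bigr => i _; rewrite scalerA.
Qed.

Lemma lattice_Osubmod A : is_lattice D A -> Osubmod D A.
Proof. by case=> s [As _]; apply: Osubmod_same (same_sym As) (Osubmod_Ospan s). Qed.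

Lemma lattice_same A B : same A B -> is_lattice D A -> is_lattice D B.
Proof. by move=> AB [s [As span_s]]; exists s; split=> //; apply: same_trans (same_sym AB) As. Qed.

Lemma span_fullv (s t : seq N) : <<s>>%VS = fullv ->
  (forall v, v \in s -> v \in <<t>>%VS) -> <<t>>%VS = fullv.
Proof. by move=> span_s st; apply/eqP; rewrite eqEsubv subvf -span_s; apply/span_subvP. Qed.

(* [pscale z A] is the lattice [pi^-z A]. *)
Definition pscale (z : int) A : N -> Prop := fun x => A (pi ^ z *: x).

Lemma piXzZ (z w : int) (x : N) : pi ^ z *: (pi ^ w *: x) = pi ^ (z + w) *: x.
Proof. by rewrite scalerA expfzDr // dvr_pi_neq0. Qed.
Lemma piXzK (z : int) (x : N) : pi ^ (- z) *: (pi ^ z *: x) = x.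
Proof. by rewrite piXzZ addNr expr0z scale1r. Qed.
Lemma piXzVK (z : int) (x : N) : pi ^ z *: (pi ^ (- z) *: x) = x.
Proof. by rewrite piXzZ subrr expr0z scale1r. Qed.

Lemma pscale_same z A B : same A B -> same (pscale z A) (pscale z B).
Proof. by move=> AB x; apply: AB. Qed.
Lemma pscale_lsubset z A B : lsubset A B -> lsubset (pscale z A) (pscale z B).
Proof. by move=> AB x; apply: AB. Qed.
Lemma pscaleD z w A : same (pscale z (pscale w A)) (pscale (w + z) A).
Proof. by move=> x; rewrite /pscale piXzZ. Qed.
Lemma pscale0 A : same (pscale 0 A) A.
Proof. by move=> x; rewrite /pscale expr0z scale1r. Qed.
Lemma pscaleK z A : same (pscale z (pscale (- z) A)) A.
Proof. by move=> x; rewrite /pscale piXzK. Qed.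
Lemma pscaleVK z A : same (pscale (- z) (pscale z A)) A.
Proof. by move=> x; rewrite /pscale piXzVK. Qed.
Lemma pscaleS z A : same (pscale (z + 1) A) (fun x => pscale z A (pi *: x)).
Proof. by move=> x; rewrite /pscale expfzDr ?dvr_pi_neq0 // expr1z scalerA. Qed.

Lemma Osubmod_pscale z A : Osubmod D A -> Osubmod D (pscale z A).
Proof.
case=> A0 AD AZ; split; rewrite /pscale.
- by rewrite scaler0.
- by move=> x y Ax Ay; rewrite scalerDr; apply: AD.
- by move=> a x Oa Ax; rewrite scalerA mulrC -scalerA; apply: AZ.
Qed.

Lemma lattice_pscale z A : is_lattice D A -> is_lattice D (pscale z A).
Proof.
case=> s [As span_s]; exists (map (fun v => pi ^ (- z) *: v) s); split.
- move=> x; rewrite /pscale; split.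
  + move/As/OspanE => [a [Oa ex]]; apply/OspanE; exists a; split=> //.
    rewrite size_map -[x](piXzK z) ex scaler_sumr; apply: eq_bigr => i _.
    by rewrite (nth_map 0) // scalerA mulrC -scalerA.
  + move/OspanE => [a [Oa ->]]; apply/As/OspanE; exists a; split=> //.
    rewrite size_map scaler_sumr; apply: eq_bigr => i _.
    by rewrite (nth_map 0) // scalerA mulrC -scalerA piXzVK.
- apply: span_fullv span_s _ => v s_v; rewrite -[v](piXzVK z).
  by apply/memvZ/memv_span/map_f.
Qed.

End Submodules.

Section Duality.
Variables (L : fieldType) (D : dvr L) (N : vectType L) (S : symplectic N).
Local Notation pi := (dvr_pi D).
Local Notation perp := (perp D S).
Implicit Types (A B : N -> Prop).

Lemma Osubmod_perp A : Osubmod D (perp A).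
Proof.
split.
- by move=> y _; rewrite sform0l; apply: dvr_O0.
- by move=> x y Ax Ay m Am; rewrite sformDl; apply: dvr_OD; [apply: Ax|apply: Ay].
- by move=> a x Oa Ax m Am; rewrite sformZl; apply: dvr_OM Oa (Ax _ Am).
Qed.

Lemma perp_same A B : same A B -> same (perp A) (perp B).
Proof. by move=> AB x; split=> Ax m /AB; apply: Ax. Qed.

Lemma perp_lsubset A B : lsubset A B -> lsubset (perp B) (perp A).
Proof. by move=> AB x Bx m /AB; apply: Bx. Qed.

Lemma lsubset_perp_perp A : lsubset A (perp (perp A)).
Proof. by move=> x Ax y Ay; rewrite sformC; apply/dvr_ON/Ay. Qed.

Lemma perp_pscale z A : same (perp (pscale D z A)) (pscale D (- z) (perp A)).
Proof.
move=> y; split=> Ay m Am.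
- by have := Ay (pi ^ (- z) *: m); rewrite /pscale piXzVK sformZr sformZl; apply.
- by have := Ay _ Am; rewrite sformZl sformZr mulrA -expfzDr ?dvr_pi_neq0 // addNr expr0z mul1r.
Qed.

End Duality.

Section CompositionSeries.
Variables (L : fieldType) (D : dvr L) (N : vectType L).
Implicit Types (A B C Q X : N -> Prop).

Definition simple_step A B := [/\ lsubset A B, ~ lsubset B A &
  forall Q, Osubmod D Q -> lsubset A Q -> lsubset Q B -> same Q A \/ same Q B].

Lemma lsum_idPr A B : Osubmod D A -> Osubmod D B -> lsubset A B -> same (lsum A B) B.
Proof.
by move=> AO BO AB; apply: lsubset_antisym; [apply: (lsum_lub BO) => // x|apply: (lsum_subr AO)].
Qed.
Lemma lcap_idPl A B : lsubset A B -> same (lcap A B) A.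
Proof. by move=> AB x; split=> [[]//|Ax]; split=> //; apply: AB. Qed.
Lemma lcap_idPr A B : lsubset B A -> same (lcap A B) B.
Proof. by move=> BA; apply: same_trans (lcapC _ _) (lcap_idPl _). Qed.

Lemma simple_step_same A A' B B' :
  same A A' -> same B B' -> simple_step A B -> simple_step A' B'.
Proof.
move=> AA' BB' [AB nBA maxAB]; split.
- by move=> x /AA' /AB /BB'.
- by move=> B'A'; apply: nBA => x /BB' /B'A' /AA'.
- move=> Q QO A'Q QB'.
  have [QA|QB] := maxAB Q QO (fun x Ax => A'Q x (proj1 (AA' x) Ax))
                        (fun x Qx => proj2 (BB' x) (QB' x Qx)).
  + by left; apply: same_trans QA AA'.
  + by right; apply: same_trans QB BB'.
Qed.

Lemma simple_step_pscale z A B : simple_step A B -> simple_step (pscale D z A) (pscale D z B).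
Proof.
case=> AB nBA maxAB; split; first exact: pscale_lsubset.
  by move=> BA; apply: nBA => x; rewrite -[x](piXzVK D z); apply: BA.
move=> Q QO AQ QB.
have AQ' : lsubset A (pscale D (- z) Q) by move=> x Ax; apply: AQ; rewrite /pscale piXzVK.
have QB' : lsubset (pscale D (- z) Q) B by move=> x /QB; rewrite /pscale piXzVK.
have [QA|QB''] := maxAB _ (Osubmod_pscale (- z) QO) AQ' QB'.
- by left; apply: same_trans (same_sym (pscaleK D z Q)) (pscale_same D _ QA).
- by right; apply: same_trans (same_sym (pscaleK D z Q)) (pscale_same D _ QB'').
Qed.

Lemma has_length_same A A' B B' m :
  same A A' -> same B B' -> has_length D A B m -> has_length D A' B' m.
Proof.
move=> AA' BB' [P [P0 Pm PO Pstep]]; exists P.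
by split=> //; [apply: same_trans P0 AA'|apply: same_trans Pm BB'].
Qed.

Lemma has_length_Osubmod A B m : has_length D A B m -> Osubmod D A /\ Osubmod D B.
Proof.
case=> P [P0 Pm PO _].
by split; [apply: Osubmod_same P0 (PO _ _)|apply: Osubmod_same Pm (PO _ _)].
Qed.

Lemma has_length_refl A : Osubmod D A -> has_length D A A 0.
Proof. by move=> AO; exists (fun=> A); split. Qed.

Lemma has_length0 A B : has_length D A B 0 -> same A B.
Proof. by case=> P [P0 Pm _ _]; apply: same_trans (same_sym P0) Pm. Qed.

Lemma has_length_cons A B C m :
  Osubmod D A -> simple_step A B -> has_length D B C m -> has_length D A C m.+1.
Proof.
move=> AO AB [P [P0 Pm PO Pstep]].
exists (fun j => if j is j'.+1 then P j' else A); split=> //.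
- by case=> // j /PO.
- case=> [_|j /Pstep //]; exact: simple_step_same (same_refl _) (same_sym P0) AB.
Qed.

Lemma has_lengthS A C m :
  has_length D A C m.+1 -> exists B, simple_step A B /\ has_length D B C m.
Proof.
case=> P [P0 Pm PO Pstep]; exists (P 1%N); split.
- exact: simple_step_same P0 (same_refl _) (Pstep 0%N _).
- by exists (fun j => P j.+1); split=> // j ltjm; [apply: PO|apply: Pstep].
Qed.

Lemma has_lengthSr A C m :
  has_length D A C m.+1 -> exists B, has_length D A B m /\ simple_step B C.
Proof.
case=> P [P0 Pm PO Pstep]; exists (P m); split.
- by exists P; split=> // j ltjm; [apply: PO; apply: leqW|apply: Pstep; apply: ltnW].
- exact: simple_step_same (same_refl _) Pm (Pstep m _).
Qed.

Lemma has_length_lsubset A B m : has_length D A B m -> lsubset A B.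
Proof.
elim: m A => [|m IHm] A; first by move=> AB; apply: same_lsubset (has_length0 AB).
by case/has_lengthS=> Q [[AQ _ _] /IHm]; apply: lsubset_trans.
Qed.

Lemma has_length_strict A B m : has_length D A B m -> (0 < m)%N -> ~ lsubset B A.
Proof.
case: m => // m /has_lengthS [Q [[_ nQA _] /has_length_lsubset QB]] _ BA.
by apply: nQA; apply: lsubset_trans QB BA.
Qed.

Lemma has_length1 A B : Osubmod D A -> Osubmod D B -> simple_step A B -> has_length D A B 1.
Proof. by move=> AO BO AB; apply: has_length_cons AB (has_length_refl BO). Qed.

Lemma has_length1E A B : has_length D A B 1 -> simple_step A B.
Proof.
case/has_lengthS=> Q [AQ QB].
exact: simple_step_same (same_refl _) (has_length0 QB) AQ.
Qed.

Lemma has_length_cat A B C r s :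
  has_length D A B r -> has_length D B C s -> has_length D A C (r + s).
Proof.
elim: r A => [|r IHr] A AB BC.
  by apply: has_length_same (same_sym (has_length0 AB)) (same_refl _) BC.
have [AO _] := has_length_Osubmod AB.
have [Q [AQ QB]] := has_lengthS AB.
exact: has_length_cons AO AQ (IHr _ QB BC).
Qed.

Lemma has_length_pscale z A B m :
  has_length D A B m -> has_length D (pscale D z A) (pscale D z B) m.
Proof.
case=> P [P0 Pm PO Pstep]; exists (fun j => pscale D z (P j)); split.
- apply: (pscale_same D z P0).
- apply: (pscale_same D z Pm).
- by move=> j lejm; apply/Osubmod_pscale/PO.
- by move=> j ltjm; apply/simple_step_pscale/Pstep.
Qed.

(* Two instances of the modular law for O-modules. *)
Lemma simple_step_lsum Q Q' B :
  Osubmod D Q -> Osubmod D Q' -> Osubmod D B -> simple_step Q Q' ->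
  lsubset (lcap Q' B) Q -> simple_step (lsum Q B) (lsum Q' B).
Proof.
move=> QO Q'O BO [QQ' nQ'Q maxQ] Q'BQ; have Q'BO := Osubmod_lsum Q'O BO.
split.
- apply: (lsum_lub Q'BO) (lsum_subr Q'O) => x /QQ'; exact: (lsum_subl BO).
- move=> Q'BQB; apply: nQ'Q => x Q'x.
  have [q [b [Qq Bb ex]]] := Q'BQB x (lsum_subl BO Q'x).
  have Qb : Q b by apply: Q'BQ; split=> //; apply: (OsubmodDr Q'O (QQ' _ Qq)); rewrite -ex.
  by rewrite ex; apply: (OsubmodD QO).
- move=> X XO QBX XQ'B; have QX x : Q x -> X x by move/(lsum_subl BO); apply: QBX.
  have BX x : B x -> X x by move/(lsum_subr QO); apply: QBX.
  have [XQ|XQ'] := maxQ (lcap X Q') (Osubmod_lcap XO Q'O)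
    (fun x Qx => conj (QX x Qx) (QQ' x Qx)) (fun x => @proj2 _ _).
  + left; apply: lsubset_antisym _ QBX => x Xx.
    have [q' [b [Q'q' Bb ex]]] := XQ'B x Xx.
    have Xq' : X q' by apply: (OsubmodDl XO (BX _ Bb)); rewrite -ex.
    by exists q', b; split=> //; apply/XQ.
  + right; apply: lsubset_antisym XQ'B _.
    by apply: (lsum_lub XO _ BX) => x /XQ' [].
Qed.

Lemma simple_step_lcap Q Q' B :
  Osubmod D Q -> Osubmod D Q' -> Osubmod D B -> simple_step Q Q' ->
  lsubset Q' (lsum Q B) -> simple_step (lcap Q B) (lcap Q' B).
Proof.
move=> QO Q'O BO [QQ' nQ'Q maxQ] Q'QB; split.
- by move=> x [Qx Bx]; split=> //; apply: QQ'.
- move=> Q'BQB; apply: nQ'Q => x Q'x.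
  have [q [b [Qq Bb ex]]] := Q'QB x Q'x.
  have Q'b : Q' b by apply: (OsubmodDr Q'O (QQ' _ Qq)); rewrite -ex.
  by rewrite ex; apply: (OsubmodD QO) => //; case: (Q'BQB b).
- move=> X XO QBX XQ'B; have XB x : X x -> B x by case/XQ'B.
  have [XQQ|XQQ'] := maxQ (lsum X Q) (Osubmod_lsum XO QO) (lsum_subr XO)
    (lsum_lub Q'O (fun x Xx => proj1 (XQ'B x Xx)) QQ').
  + left; apply: lsubset_antisym _ QBX => x Xx; split; last exact: XB.
    by apply/(XQQ x)/(lsum_subl QO).
  + right; apply: lsubset_antisym XQ'B _ => x [Q'x Bx].
    have [a [q [Xa Qq ex]]] := proj2 (XQQ' x) Q'x.
    have Xq : X q.
      by apply: QBX; split=> //; apply: (OsubmodDr BO (XB _ Xa)); rewrite -ex.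
    by rewrite ex; apply: (OsubmodD XO).
Qed.

Lemma has_length_cancell A B C r : has_length D A C r -> Osubmod D B ->
  simple_step A B -> lsubset B C -> has_length D B C r.-1.
Proof.
elim: r A B => [|r IHr] A B AC BO [AB nBA maxAB] BC.
  by exfalso; apply: nBA; apply: lsubset_trans BC (same_lsubset (same_sym (has_length0 AC))).
have [AO _] := has_length_Osubmod AC.
have [Q [[AQ nQA maxAQ] QC]] := has_lengthS AC; have [QO CO] := has_length_Osubmod QC.
have [BQ|nBQ] := classic (lsubset B Q).
  have [BA|BQ'] := maxAQ B BO AB BQ; first by exfalso; exact: nBA (same_lsubset BA).
  exact: has_length_same (same_sym BQ') (same_refl _) QC.
have QBA : lsubset (lcap Q B) A.
  have [QBA|QBB] := maxAB _ (Osubmod_lcap QO BO) (fun x Ax => conj (AQ x Ax) (AB x Ax))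
    (fun x => @proj2 _ _); first exact: same_lsubset.
  by exfalso; apply: nBQ => x /(QBB x) [].
have QS : simple_step Q (lsum Q B).
  apply: simple_step_same (lsum_idPr AO QO AQ) (lsumC _ _) _.
  by apply: simple_step_lsum => //; apply: lsubset_trans (same_lsubset (lcapC _ _)) QBA.
have BS : simple_step B (lsum Q B).
  by apply: simple_step_same (lsum_idPr AO BO AB) (same_refl _) (simple_step_lsum _ _ _ _ _).
clear AC; case: r IHr QC => [_ QC|r IHr QC].
  by exfalso; apply: nBQ; apply: lsubset_trans BC (same_lsubset (same_sym (has_length0 QC))).
apply: has_length_cons BO BS (IHr _ _ QC (Osubmod_lsum QO BO) QS _).
exact: lsum_lub CO (has_length_lsubset QC) BC.
Qed.

Lemma has_length_cancelr A B C r : has_length D A C r -> Osubmod D B ->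
  simple_step B C -> lsubset A B -> has_length D A B r.-1.
Proof.
elim: r B C => [|r IHr] B C AC BO [BC nCB maxBC] AB.
  by exfalso; apply: nCB; apply: lsubset_trans (same_lsubset (same_sym (has_length0 AC))) AB.
have [_ CO] := has_length_Osubmod AC.
have [Q [AQ [QC nCQ maxQC]]] := has_lengthSr AC; have [AO QO] := has_length_Osubmod AQ.
have [QB|nQB] := classic (lsubset Q B).
  have [BQ|BC'] := maxQC B BO QB BC; last by exfalso; exact: nCB (same_lsubset (same_sym BC')).
  exact: has_length_same (same_refl _) (same_sym BQ) AQ.
have CBQ : lsubset C (lsum B Q).
  have [BQB|BQC] := maxBC _ (Osubmod_lsum BO QO) (lsum_subl QO) (lsum_lub CO BC QC).
    by exfalso; apply: nQB => x /(lsum_subr BO) /(BQB x).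
  by apply: same_lsubset; apply: same_sym.
have QS : simple_step (lcap B Q) Q.
  by apply: simple_step_same (same_refl _) (lcap_idPr QC) (simple_step_lcap _ _ _ _ _).
have BS : simple_step (lcap B Q) B.
  apply: simple_step_same (lcapC _ _) (lcap_idPr BC) (simple_step_lcap _ _ _ _ _) => //.
  exact: lsubset_trans CBQ (same_lsubset (lsumC _ _)).
clear AC; case: r IHr AQ => [_ AQ|r IHr AQ].
  by exfalso; apply: nQB; apply: lsubset_trans (same_lsubset (same_sym (has_length0 AQ))) AB.
rewrite -addn1; apply: has_length_cat (IHr _ _ AQ (Osubmod_lcap BO QO) QS _) _.
  by move=> x Ax; split; [apply: AB|apply: (has_length_lsubset AQ)].
exact: has_length1 (Osubmod_lcap BO QO) BO BS.
Qed.

Lemma chain_of_consecutive (I : int -> Prop) (F : int -> N -> Prop) :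
  (forall i i', I i -> I i' -> i < i' -> (forall j, I j -> i < j -> j < i' -> False) ->
     has_length D (F i) (F i') `|i' - i|%N) ->
  forall i i', I i -> I i' -> i < i' -> has_length D (F i) (F i') `|i' - i|%N.
Proof.
move=> Fcons i i'; move: {2}`|i' - i|%N (leqnn `|i' - i|%N) => m.
elim: m i i' => [|m IHm] i i' le_m Ii Ii' lt_ii'; first by move: le_m; lia.
have [[j [Ij lt_ij lt_ji']]|no_j] := classic (exists j, [/\ I j, i < j & j < i']).
  have le_ij : (`|j - i| <= m)%N by lia.
  have le_ji' : (`|i' - j| <= m)%N by lia.
  rewrite (_ : `|i' - i|%N = `|j - i| + `|i' - j|)%N; last by lia.
  exact: has_length_cat (IHm i j le_ij Ii Ij lt_ij) (IHm j i' le_ji' Ij Ii' lt_ji').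
by apply: Fcons => // j Ij lt_ij lt_ji'; apply: no_j; exists j.
Qed.

End CompositionSeries.

Section SimpleQuotients.
Variables (L : fieldType) (D : dvr L) (N : vectType L).
Local Notation O := (dvr_O D).
Local Notation pi := (dvr_pi D).
Implicit Types (A B Q : N -> Prop).

Lemma simple_step_lsum_Oline A B v : Osubmod D A -> Osubmod D B -> simple_step D A B ->
  B v -> ~ A v -> same (lsum A (Oline D v)) B.
Proof.
move=> AO BO [AB nBA maxAB] Bv nAv; have vO := Osubmod_Oline D v.
have Av_B : lsubset (lsum A (Oline D v)) B.
  by apply: (lsum_lub BO AB) => _ [a [Oa ->]]; apply: (OsubmodZ BO).
have [AvA|//] := maxAB _ (Osubmod_lsum AO vO) (lsum_subl vO) Av_B.
exfalso; apply/nAv/(AvA v)/(lsum_subr AO).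
by exists 1; rewrite scale1r; split=> //; apply: dvr_O1.
Qed.

Lemma simple_step_dim1 A B : Osubmod D A -> Osubmod D B -> simple_step D A B -> dim1 D A B.
Proof.
move=> AO BO stepAB; have [AB nBA _] := stepAB.
have [x0 [Bx0 nAx0]] := not_lsubset nBA.
have gen v y : B v -> ~ A v -> B y -> exists m a, [/\ A m, O a & y = m + a *: v].
  move=> Bv nAv /(simple_step_lsum_Oline AO BO stepAB Bv nAv y) [m [_ [Am [a [Oa ->]] ->]]].
  by exists m, a.
split.
- move=> _ [y [By ->]]; apply: NNPP => nApy.
  have Bpy : B (pi *: y) by apply: (OsubmodZ BO) By; apply: dvr_piO.
  have [m [a [Am Oa ex0]]] := gen _ _ Bpy nApy Bx0.
  have [m' [b [Am' Ob ey]]] := gen _ _ Bx0 nAx0 By.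
  (* [x0 = m + a pi (m' + b x0)], so [(1 - a pi b) x0] lies in [A] and [1 - a pi b] is a unit. *)
  pose u := 1 - a * pi * b.
  have Ou : O u by apply: dvr_OB (dvr_O1 D) (dvr_OM (dvr_OM Oa (dvr_piO D)) Ob).
  have Opiu : ~ O (pi^-1 * u).
    move=> Opiu; apply: (@dvr_pi_nonunit _ D).
    have -> : pi^-1 = pi^-1 * u + a * b by rewrite /u; have pi0 := dvr_pi_neq0 D; field.
    exact: dvr_OD Opiu (dvr_OM Oa Ob).
  have [Oui u0] := dvr_unit Ou Opiu.
  have Aux0 : A (u *: x0).
    have -> : u *: x0 = m + (a * pi) *: m'.
      by rewrite /u scalerBl scale1r {1}ex0 ey !scalerDr !scalerA addrA addrK.
    exact: OsubmodD AO Am (OsubmodZ AO (dvr_OM Oa (dvr_piO D)) Am').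
  by apply: nAx0; rewrite -[x0](scalerK u0); exact: OsubmodZ AO Oui Aux0.
- exists x0; split=> // y By.
  by have [m [a [Am Oa ->]]] := gen _ _ Bx0 nAx0 By; exists a; rewrite addrK.
Qed.

Lemma dim1_simple_step A B : Osubmod D A -> Osubmod D B -> lsubset A B ->
  dim1 D A B -> simple_step D A B.
Proof.
move=> AO BO AB [piBA [x0 [Bx0 nAx0 genB]]]; split=> //; first by move/(_ x0 Bx0).
move=> Q QO AQ QB; have [QA|nQA] := classic (lsubset Q A).
  by left; apply: lsubset_antisym.
right; have [q [Qq nAq]] := not_lsubset nQA.
have [a [Oa Aqa]] := genB q (QB q Qq).
have Qax0 : Q (a *: x0) by apply: (OsubmodDr QO (AQ _ Aqa)); rewrite subrK.
(* [a] is a unit, since otherwise [q = (q - a x0) + pi (pi^-1 a x0)] would lie in [A]. *)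
have Qx0 : Q x0.
  have [Opia|nOpia] := classic (O (pi^-1 * a)).
    exfalso; apply: nAq; rewrite -(subrK (a *: x0) q); apply: (OsubmodD AO Aqa).
    have -> : a *: x0 = pi *: ((pi^-1 * a) *: x0).
      by rewrite scalerA mulrA mulfV ?dvr_pi_neq0 // mul1r.
    by apply: piBA; exists ((pi^-1 * a) *: x0); split=> //; apply: (OsubmodZ BO).
  have [Oai a0] := dvr_unit Oa nOpia.
  by rewrite -[x0](scalerK a0); exact: OsubmodZ QO Oai Qax0.
apply: lsubset_antisym QB _ => y By; have [b [Ob Ayb]] := genB y By.
by rewrite -(subrK (b *: x0) y); apply: (OsubmodD QO (AQ _ Ayb)); apply: (OsubmodZ QO).
Qed.

End SimpleQuotients.

Section PerpOfSimpleStep.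
Variables (L : fieldType) (D : dvr L) (N : vectType L) (S : symplectic N).
Local Notation O := (dvr_O D).
Local Notation pi := (dvr_pi D).
Local Notation sf := (sform S).
Local Notation perp := (perp D S).
(* [A < P] with [P / A] simple: the hypotheses on [x0] unfold [dim1 D A P]. *)
Variables (A P : N -> Prop) (x0 : N).
Hypotheses (PO : Osubmod D P) (AP : lsubset A P) (perpK_A : same (perp (perp A)) A).
Hypotheses (Px0 : P x0) (nAx0 : ~ A x0)
  (genP : forall y, P y -> exists a, O a /\ A (y - a *: x0))
  (piP : forall y, P y -> A (pi *: y)).

Lemma perp_extP y : perp A y -> (perp P y <-> O (sf y x0)).
Proof.
move=> Ay; split=> [Py|Oyx0 p Pp]; first exact: Py.
have [a [Oa Apa]] := genP Pp.
rewrite -(subrK (a *: x0) p) sformDr sformZr.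
exact: dvr_OD (Ay _ Apa) (dvr_OM Oa Oyx0).
Qed.

Lemma perp_pi_sform y : perp A y -> O (pi * sf y x0).
Proof. by move=> Ay; rewrite -sformZr; apply/Ay/piP. Qed.

Lemma perp_ext_unit r : perp A r -> ~ O (sf r x0) ->
  O (pi * sf r x0)^-1 /\ sf r x0 != 0.
Proof.
move=> Ar nOr; have [Oi b0] : O (pi * sf r x0)^-1 /\ pi * sf r x0 != 0.
  by apply: dvr_unit (perp_pi_sform Ar) _; rewrite mulrA mulVf ?dvr_pi_neq0 // mul1r.
by split=> //; apply: contraNneq b0 => ->; rewrite mulr0.
Qed.

Lemma perp_ext_coef r y : perp A r -> ~ O (sf r x0) -> perp A y ->
  O (sf y x0 / sf r x0).
Proof.
move=> Ar nOr Ay; have [Oi b0] := perp_ext_unit Ar nOr.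
have -> : sf y x0 / sf r x0 = (pi * sf y x0) * (pi * sf r x0)^-1.
  by have pi0 := dvr_pi_neq0 D; field; rewrite b0 pi0.
exact: dvr_OM (perp_pi_sform Ay) Oi.
Qed.

Lemma perp_ext_proj r y : perp A r -> ~ O (sf r x0) -> perp A y ->
  perp P (y - (sf y x0 / sf r x0) *: r).
Proof.
move=> Ar nOr Ay; have [_ b0] := perp_ext_unit Ar nOr.
have PA := Osubmod_perp D S A.
apply/perp_extP; first exact: OsubmodB PA Ay (OsubmodZ PA (perp_ext_coef Ar nOr Ay) Ar).
by rewrite sformBl sformZl mulfVK // subrr; apply: dvr_O0.
Qed.

Lemma perp_ext_pi y : perp A y -> perp P (pi *: y).
Proof.
move=> Ay; apply/(perp_extP (OsubmodZ (Osubmod_perp D S A) (dvr_piO D) Ay)).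
by rewrite sformZl; apply: perp_pi_sform.
Qed.

Lemma perp_ext_witness : exists y0, perp A y0 /\ ~ O (sf y0 x0).
Proof.
apply: NNPP => nex; apply/nAx0/(perpK_A x0) => y Ay.
by rewrite sformC; apply: dvr_ON; apply: NNPP => nO; apply: nex; exists y.
Qed.

Lemma simple_step_perp : simple_step D (perp P) (perp A).
Proof.
have [y0 [Ay0 nOy0]] := perp_ext_witness.
split; first exact: perp_lsubset.
  by move=> AP'; apply/nOy0/AP'.
move=> X XO PX XA; have [XP|nXP] := classic (lsubset X (perp P)).
  by left; apply: lsubset_antisym.
right; have [r [Xr nPr]] := not_lsubset nXP.
have Ar := XA r Xr; have nOr : ~ O (sf r x0) by move=> Or; apply/nPr/(perp_extP Ar).
apply: lsubset_antisym XA _ => y Ay; rewrite -(subrK ((sf y x0 / sf r x0) *: r) y).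
apply: (OsubmodD XO (PX _ (perp_ext_proj Ar nOr Ay))).
exact: OsubmodZ XO (perp_ext_coef Ar nOr Ay) Xr.
Qed.

Lemma perp_perp_ext : same (perp (perp P)) P.
Proof.
have [y0 [Ay0 nOy0]] := perp_ext_witness.
have [Opbi be0] := perp_ext_unit Ay0 nOy0; set be := sf y0 x0 in Opbi be0 *.
apply: lsubset_antisym _ (@lsubset_perp_perp _ D _ S P) => w Pw.
(* [w - b x0] is orthogonal to [y0] and to [perp P], hence lies in [perp (perp A) = A]. *)
pose b := sf y0 w / be.
have Ob : O b.
  have -> : b = (pi * sf y0 w) * (pi * be)^-1.
    by have pi0 := dvr_pi_neq0 D; rewrite /b; field; rewrite be0 pi0.
  by apply: dvr_OM Opbi; rewrite -sformZl sformC; apply/dvr_ON/Pw/perp_ext_pi.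
have Awb : A (w - b *: x0).
  apply/(perpK_A _) => y Ay; set c := sf y x0 / be.
  have Pwb : perp (perp P) (w - b *: x0).
    have Px0' := lsubset_perp_perp (D:=D) (S:=S) Px0.
    exact: OsubmodB (Osubmod_perp D S _) Pw (OsubmodZ (Osubmod_perp D S _) Ob Px0').
  have wby0 : sf (w - b *: x0) y0 = 0.
    by rewrite sformBl sformZl (sformC S w) (sformC S x0) -/be mulrN opprK /b mulfVK // addNr.
  rewrite -(subrK (c *: y0) y) sformDr sformZr wby0 mulr0 addr0.
  exact: Pwb _ (perp_ext_proj Ay0 nOy0 Ay).
by rewrite -(subrK (b *: x0) w); apply: (OsubmodD PO (AP Awb)); apply: OsubmodZ PO Ob Px0.
Qed.

Lemma lattice_perp_ext : is_lattice D (perp A) -> is_lattice D (perp P).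
Proof.
have [y0 [Ay0 nOy0]] := perp_ext_witness; have pi0 := dvr_pi_neq0 D.
have [Opbi be0] := perp_ext_unit Ay0 nOy0; set be := sf y0 x0 in Opbi be0 *.
(* [perp P] is spanned by [pi y0] and the projections [g v] of generators of [perp A]. *)
pose g v := v - (sf v x0 / be) *: y0.
have g_lin a u v : g (a *: u + v) = a *: g u + g v.
  by rewrite /g sformDl sformZl mulrDl scalerDl scalerBr scalerA mulrA opprD addrACA.
have gP v : perp A v -> perp P (g v) := perp_ext_proj Ay0 nOy0.
case=> t [At span_t]; exists (rcons (map g t) (pi *: y0)); split=> [y|].
  split=> [Py|/Ospan_rcons [_ [_ [/(Ospan_map D _ _ g_lin) [u [tu ->]] [a [Oa ->]] ->]]]].
    have Ay := perp_lsubset AP Py; apply/Ospan_rcons.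
    exists (g y), ((sf y x0 * (pi * be)^-1) *: (pi *: y0)); split.
    - by apply/(Ospan_map D _ _ g_lin); exists y; split=> //; apply/(At y).
    - by exists (sf y x0 * (pi * be)^-1); split=> //; apply: dvr_OM Opbi; apply/(perp_extP Ay).
    - by rewrite scalerA (_ : _ * pi = sf y x0 / be) ?subrK //; field; rewrite be0 pi0.
  apply: OsubmodD (Osubmod_perp D S P) (gP _ _) _; first exact/(At u).
  exact: OsubmodZ (Osubmod_perp D S P) Oa (perp_ext_pi Ay0).
apply: span_fullv span_t _ => v tv.
have Av : perp A v by apply/(At v); rewrite -(nth_index 0 tv); apply: Ospan_nth; rewrite index_mem.
have -> : v = g v + (sf v x0 / be / pi) *: (pi *: y0) by rewrite /g scalerA mulfVK // subrK.
apply: memvD; first by apply: memv_span; rewrite mem_rcons inE map_f ?orbT.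
by apply/memvZ/memv_span; rewrite mem_rcons inE eqxx.
Qed.

Lemma pscale_perp_ext w : lsubset P (pscale D w (perp A)) -> lsubset P (pscale D w (perp P)).
Proof.
move=> PA x Px; apply/(perp_extP (PA _ Px)); have [a [Oa Axa]] := genP Px.
rewrite -(subrK (a *: x0) x) scalerDr sformDl !sformZl sform_alt !mulr0 addr0.
by rewrite sformC mulrN -sformZl; apply/dvr_ON/(PA _ Px0).
Qed.

End PerpOfSimpleStep.

Lemma eqz_modE (i c m : int) : (i = c %[mod m])%Z <-> exists z, i = c + m * z.
Proof.
split.
- move/eqP; rewrite eqz_mod_dvd => /dvdzP [q eq]; exists q.
  by rewrite mulrC -eq addrC subrK.
- case=> z ->; apply/eqP; rewrite eqz_mod_dvd; apply/dvdzP; exists z.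
  by rewrite addrC addKr mulrC.
Qed.

Lemma periodic_shift (I : int -> Prop) (m : int) :
  (forall i, I i <-> I (i + m)) -> forall i z, I i <-> I (i + m * z).
Proof.
move=> I_per; have I_nat (q : nat) i : I i <-> I (i + m * q%:Z).
  elim: q i => [|q IHq] i; first by rewrite mulr0 addr0.
  by rewrite -addn1 PoszD mulrDr mulr1 addrA; apply: iff_trans (IHq i) (I_per _).
move=> i [q|q]; first exact: I_nat.
by have := I_nat q.+1 (i + m * Negz q); rewrite NegzE mulrN subrK => -[].
Qed.

Lemma consecutive_next (I : int -> Prop) i i' j :
  (forall j, I j -> i < j -> j < i' -> False) -> I j -> i < j -> i' <= j.
Proof. by move=> cons Ij lt_ij; rewrite leNgt; apply/negP; apply: cons Ij lt_ij. Qed.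

Lemma consecutive_prev (I : int -> Prop) i i' j :
  (forall j, I j -> i < j -> j < i' -> False) -> I j -> j < i' -> j <= i.
Proof.
by move=> cons Ij lt_ji'; rewrite leNgt; apply/negP => lt_ij; apply: cons Ij lt_ij lt_ji'.
Qed.

Section Periodicity.
Variables (L : fieldType) (D : dvr L) (N : vectType L).
Local Notation pi := (dvr_pi D).

Lemma chain_shift (I : int -> Prop) (F : int -> N -> Prop) (m : int) :
  (forall i, I i <-> I (i + m)) ->
  (forall i, I i -> same (F (i + m)) (fun x => F i (pi *: x))) ->
  forall i z, I i -> same (F (i + m * z)) (pscale D z (F i)).
Proof.
move=> I_per F_per.
have F_nat (q : nat) i : I i -> same (F (i + m * q%:Z)) (pscale D q%:Z (F i)).
  elim: q => [|q IHq] Ii; first by rewrite mulr0 addr0; apply: same_sym (pscale0 D _).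
  rewrite -addn1 PoszD mulrDr mulr1 addrA.
  apply: same_trans (F_per _ ((periodic_shift I_per _ _).1 Ii)) _.
  by apply: same_sym; apply: same_trans (pscaleS D _ _) _ => x; apply: iff_sym; apply: IHq.
move=> i [q|q] Ii; first exact: F_nat.
set i' := i + m * Negz q; have Ii' : I i' := (periodic_shift I_per _ _).1 Ii.
have := F_nat q.+1 i' Ii'; rewrite /i' NegzE mulrN subrK => Fi.
apply: same_trans (same_sym (pscaleVK D q.+1%:Z _)) _.
apply: (pscale_same D _ (same_sym Fi)).
Qed.

End Periodicity.

Section Fibre.
Variables (L : fieldType) (D : dvr L) (N : vectType L) (S : symplectic N) (n : nat).
Hypothesis n_gt0 : (0 < n)%N.
Variable J : int -> Prop.
Hypotheses (J_per : forall i, J i <-> J (i + (2 * n)%N%:Z)) (J_sym : forall i, J i <-> J (- i)).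
Variables (k l : int).
Hypotheses (Jk : J k) (nJk1 : ~ J (k + 1)) (Jl : J l) (lt_kl : k < l)
  (l_min : forall j, J j -> k < j -> l <= j).
Variables (M : int -> N -> Prop) (d : int).
Local Notation m2 := ((2 * n)%N%:Z).
Local Notation O := (dvr_O D).
Local Notation pi := (dvr_pi D).
Local Notation perp := (perp D S).
Hypotheses (M_lattice : forall i, J i -> is_lattice D (M i))
  (M_chain : forall i i', J i -> J i' -> i < i' ->
     lsubset (M i) (M i') /\ has_length D (M i) (M i') `|i' - i|%N)
  (M_per : forall i, J i -> same (M (i + m2)) (fun x => M i (pi *: x)))
  (M_dual : forall i, J i -> same (perp (M i)) (M (- i + m2 * d))).

Lemma m2_neq0 : m2 != 0. Proof. by rewrite eqz_nat -lt0n muln_gt0. Qed.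

Lemma J_shift i z : J i <-> J (i + m2 * z). Proof. exact: periodic_shift. Qed.

Lemma J_reflect i z : J i -> J (- i + m2 * z).
Proof. by move/J_sym/(J_shift _ z). Qed.

Lemma lt_k1_l : k + 1 < l.
Proof. have : k + 1 != l by apply: contra_notN nJk1 => /eqP ->. by move: lt_kl; lia. Qed.

Lemma notJ_k1 z : ~ J (k + 1 + m2 * z).
Proof. by move=> Jz; apply/nJk1/(J_shift _ z). Qed.

Lemma notJ_k1_reflect z : ~ J (- (k + 1) + m2 * z).
Proof. by move=> Jz; apply/nJk1/(J_sym (k + 1))/(J_shift _ z). Qed.

Lemma M_shift i z : J i -> same (M (i + m2 * z)) (pscale D z (M i)).
Proof. exact: chain_shift. Qed.

Lemma M_inj i j : J i -> J j -> same (M i) (M j) -> i = j.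
Proof.
move=> Ji Jj Mij; case: (ltgtP i j) => // [lt_ij|lt_ji]; exfalso.
- apply: (has_length_strict (M_chain Ji Jj lt_ij).2); first lia.
  exact: same_lsubset (same_sym Mij).
- apply: (has_length_strict (M_chain Jj Ji lt_ji).2); first lia.
  exact: same_lsubset Mij.
Qed.

Definition Iset i := J i \/ (i = k + 1 %[mod m2])%Z \/ (i = - (k + 1) %[mod m2])%Z.

Lemma IsetE i : Iset i <->
  J i \/ (exists z, i = k + 1 + m2 * z) \/ (exists z, i = - (k + 1) + m2 * z).
Proof.
split=> [[Ji|[/eqz_modE e|/eqz_modE e]]|[Ji|[/eqz_modE e|/eqz_modE e]]];
  by [left|right; left|right; right].
Qed.

Lemma Iset_shift i z : Iset i -> Iset (i + m2 * z).
Proof.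
move/IsetE=> [Ji|[[w ->]|[w ->]]]; apply/IsetE.
- by left; apply/(J_shift i z).
- by right; left; exists (w + z); rewrite mulrDr addrA.
- by right; right; exists (w + z); rewrite mulrDr addrA.
Qed.

Lemma Iset_per i : Iset i <-> Iset (i + m2).
Proof. by split=> [/(Iset_shift 1)|/(Iset_shift (-1))]; rewrite ?mulr1 // mulrN1 addrK. Qed.

Lemma fibre_shift M' : selfdual_chain D S n Iset M' ->
  forall i z, Iset i -> same (M' (i + m2 * z)) (pscale D z (M' i)).
Proof. by case=> _ _ M'_per _; apply: chain_shift Iset_per M'_per. Qed.

Definition fibre M' := selfdual_chain D S n Iset M' /\ forall i, J i -> same (M' i) (M i).

Lemma fibre_target M' : fibre M' ->
  [/\ is_lattice D (M' (k + 1)), lsubset (M k) (M' (k + 1)),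
      lsubset (M' (k + 1)) (M l) & dim1 D (M k) (M' (k + 1))].
Proof.
case=> [[M'_lat M'_chain _ _] M'M].
have Ik : Iset k by left.
have Ik1 : Iset (k + 1) by right; left.
have lt_k_k1 : k < k + 1 by rewrite ltzD1.
have [_ len1] := M'_chain _ _ Ik Ik1 lt_k_k1.
have [k1l _] := M'_chain _ _ Ik1 (or_introl Jl) lt_k1_l.
rewrite addrAC subrr add0r in len1.
have {}len1 := has_length_same (M'M _ Jk) (same_refl _) len1.
have [MkO PO] := has_length_Osubmod len1.
split; first exact: M'_lat.
- exact: has_length_lsubset len1.
- by move=> x /k1l /(M'M _ Jl x).
- exact: simple_step_dim1 MkO PO (has_length1E len1).
Qed.

Lemma fibre_dual_index M' d' : (forall i, J i -> same (M' i) (M i)) ->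
  (forall i, Iset i -> same (perp (M' i)) (M' (- i + m2 * d'))) -> d' = d.
Proof.
move=> M'M M'_dual; have Jd' := J_reflect d' Jk; have Jd := J_reflect d Jk.
have : same (M (- k + m2 * d')) (M (- k + m2 * d)).
  apply: same_trans (same_sym (M'M _ Jd')) _.
  apply: same_trans (same_sym (M'_dual k (or_introl Jk))) _.
  exact: same_trans (perp_same D S (M'M k Jk)) (M_dual Jk).
by move/(M_inj Jd' Jd)/addrI/(mulfI m2_neq0).
Qed.

Lemma fibre_unique M' M'' : fibre M' -> fibre M'' ->
  same (M' (k + 1)) (M'' (k + 1)) -> forall i, Iset i -> same (M' i) (M'' i).
Proof.
move=> [chain' M'M] [chain'' M''M] eq_k1.
have Ik1 : Iset (k + 1) by right; left.
have eq_k1_shift z : same (M' (k + 1 + m2 * z)) (M'' (k + 1 + m2 * z)).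
  apply: same_trans (fibre_shift chain' z Ik1) _.
  exact: same_trans (pscale_same D z eq_k1) (same_sym (fibre_shift chain'' z Ik1)).
move=> i /IsetE [Ji|[[z ->]|[z ->]]]; first exact: same_trans (M'M _ Ji) (same_sym (M''M _ Ji)).
  exact: eq_k1_shift.
(* Both chains have the duality index [d] of [M], and [-(k + 1) + 2nz] is dual to
   a lattice in the class of [k + 1]. *)
have [_ _ _ [d' dual']] := chain'; have [_ _ _ [d'' dual'']] := chain''.
have ed' := fibre_dual_index M'M dual'; have ed'' := fibre_dual_index M''M dual''.
subst d' d''.
pose j := k + 1 + m2 * (d - z).
have Ij : Iset j by apply/IsetE; right; left; exists (d - z).
have -> : - (k + 1) + m2 * z = - j + m2 * d by rewrite /j; ring.
apply: same_trans (same_sym (dual' j Ij)) _; apply: same_trans _ (dual'' j Ij).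
apply: (perp_same D S (eq_k1_shift _)).
Qed.

Section Extension.
Variables (P : N -> Prop) (x0 : N).
Hypotheses (P_lattice : is_lattice D P) (MkP : lsubset (M k) P) (PMl : lsubset P (M l))
  (Px0 : P x0) (nMx0 : ~ M k x0)
  (genP : forall y, P y -> exists a, O a /\ M k (y - a *: x0))
  (piP : forall y, P y -> M k (pi *: y)).

Local Notation c := (k + 1).
Local Notation Mkd := (M (- k + m2 * d)).
Local Notation Mld := (M (- l + m2 * d)).
Local Notation Pd := (perp P).
Local Notation c_selfdual := (exists w : int, - c + m2 * d = c + m2 * w).
Local Notation consecutive i i' := (forall j, Iset j -> i < j -> j < i' -> False).

Lemma Jkd : J (- k + m2 * d). Proof. exact: J_reflect. Qed.
Lemma Jld : J (- l + m2 * d). Proof. exact: J_reflect. Qed.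

Lemma perp_perp_Mk : same (perp (perp (M k))) (M k).
Proof.
apply: same_trans (perp_same D S (M_dual Jk)) _.
by have := M_dual Jkd; rewrite opprD opprK subrK.
Qed.

Lemma P_Osubmod : Osubmod D P. Proof. exact: lattice_Osubmod. Qed.

Lemma simple_step_MkP : simple_step D (M k) P.
Proof.
apply: dim1_simple_step (lattice_Osubmod (M_lattice Jk)) P_Osubmod MkP _.
by split; [move=> _ [y [Py ->]]; apply: piP|exists x0].
Qed.

Lemma length_Mk_P : has_length D (M k) P 1.
Proof. exact: has_length1 (lattice_Osubmod (M_lattice Jk)) P_Osubmod simple_step_MkP. Qed.

Lemma length_P_Ml : has_length D P (M l) `|l - k|.-1.
Proof. exact: has_length_cancell (M_chain Jk Jl lt_kl).2 P_Osubmod simple_step_MkP PMl. Qed.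

Lemma simple_step_Pd : simple_step D Pd Mkd.
Proof.
apply: simple_step_same (same_refl _) (M_dual Jk) _.
exact: simple_step_perp MkP perp_perp_Mk Px0 nMx0 genP piP.
Qed.

Lemma length_Pd_Mkd : has_length D Pd Mkd 1.
Proof.
exact: has_length1 (Osubmod_perp D S P) (lattice_Osubmod (M_lattice Jkd)) simple_step_Pd.
Qed.

Lemma Pd_lattice : is_lattice D Pd.
Proof.
apply: lattice_perp_ext MkP perp_perp_Mk Px0 nMx0 genP piP _.
exact: lattice_same (same_sym (M_dual Jk)) (M_lattice Jkd).
Qed.

Lemma Pd_perp : same (perp Pd) P.
Proof. exact: perp_perp_ext P_Osubmod MkP perp_perp_Mk Px0 nMx0 genP piP. Qed.

Lemma length_Mld_Pd : has_length D Mld Pd `|l - k|.-1.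
Proof.
have lt_ld_kd : - l + m2 * d < - k + m2 * d by rewrite ltrD2r ltrN2.
have := (M_chain Jld Jkd lt_ld_kd).2.
rewrite (_ : - k + m2 * d - (- l + m2 * d) = l - k); last by ring.
move/has_length_cancelr; apply; [exact: Osubmod_perp|exact: simple_step_Pd|].
by move=> x /(M_dual Jl x) Mlx y /PMl; apply: Mlx.
Qed.

Lemma P_pscale_Pd w : lsubset P (pscale D w Mkd) -> lsubset P (pscale D w Pd).
Proof.
move=> PMkd; apply: (pscale_perp_ext Px0 genP).
by move=> x /PMkd /(M_dual Jk _).
Qed.

(* When the classes of [k + 1] and [-(k + 1)] mod [2n] coincide, [l = k + 2]
   and [Pd] is a translate of [P]. *)
Lemma Pd_selfdual w : - c + m2 * d = c + m2 * w -> same Pd (pscale D w P).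
Proof.
move=> e; have ekd : - k + m2 * d + m2 * (- w) = k + 2 by move: e; rewrite mulrN; lia.
have Jk2 : J (k + 2) by rewrite -ekd; exact: (J_shift _ (- w)).1 Jkd.
have el : l = k + 2.
  by have := l_min Jk2 (_ : k < k + 2); have := lt_k1_l; lia.
have Ml : same (M l) (pscale D (- w) Mkd) by rewrite el -ekd; apply: M_shift Jkd.
have PPd : lsubset P (pscale D (- w) Pd) by apply: P_pscale_Pd => x /PMl /(Ml x).
have [_ _ maxP] : simple_step D P (M l).
  by apply: has_length1E; have := length_P_Ml; rewrite el addrAC subrr add0r.
have [PdMkd nMkdPd _] := simple_step_Pd.
have PdMl : lsubset (pscale D (- w) Pd) (M l) by move=> x /PdMkd /(Ml x).
have [PdP|PdMl'] := maxP _ (Osubmod_pscale (- w) (Osubmod_perp D S P)) PPd PdMl.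
  by apply: same_trans (same_sym (pscaleK D w Pd)) (pscale_same D w PdP).
exfalso; apply: nMkdPd => x Mkdx; apply/(pscaleK D w Pd x)/(PdMl' _)/(Ml _).
by rewrite /pscale piXzK.
Qed.

Definition ext_chain i : N -> Prop := fun x =>
  (J i /\ M i x) \/ (exists z, i = c + m2 * z /\ pscale D z P x) \/
  (~ c_selfdual /\ exists z, i = - c + m2 * d + m2 * z /\ pscale D z Pd x).

Lemma ext_chain_J i : J i -> same (ext_chain i) (M i).
Proof.
move=> Ji x; split=> [[[]//|[[z [ei _]]|[_ [z [ei _]]]]]|Mix]; last by left.
  by move: Ji; rewrite ei => /notJ_k1.
by move: Ji; rewrite ei -addrA -mulrDr => /notJ_k1_reflect.
Qed.

Lemma ext_chain_c z : same (ext_chain (c + m2 * z)) (pscale D z P).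
Proof.
move=> x; split=> [[[/notJ_k1 //]|[[z' [/addrI/(mulfI m2_neq0) <- //]]|[nsd [z' [e _]]]]]|Px].
  exfalso; apply: nsd; exists (z - z').
  rewrite (_ : - c + m2 * d = - c + m2 * d + m2 * z' - m2 * z'); last by ring.
  by rewrite -e; ring.
by right; left; exists z.
Qed.

Lemma ext_chain_cdual z : ~ c_selfdual ->
  same (ext_chain (- c + m2 * d + m2 * z)) (pscale D z Pd).
Proof.
move=> nsd x; split=> [[[]|[[z' [e _]]|[_ [z' [/addrI/(mulfI m2_neq0) <- //]]]]]|Pdx].
- by rewrite -addrA -mulrDr => /notJ_k1_reflect.
- exfalso; apply: nsd; exists (z' - z).
  rewrite (_ : - c + m2 * d = - c + m2 * d + m2 * z - m2 * z); last by ring.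
  by rewrite e; ring.
- by right; right; split=> //; exists z.
Qed.

Lemma Iset_cases i : Iset i -> J i \/ (exists z, i = c + m2 * z) \/
  (~ c_selfdual /\ exists z, i = - c + m2 * d + m2 * z).
Proof.
move/IsetE=> [Ji|[ci|[z ->]]]; [by left|by right; left|].
have [[w e]|nsd] := classic c_selfdual.
  right; left; exists (w + (z - d)).
  rewrite (_ : - c + m2 * z = - c + m2 * d + m2 * (z - d)); last by ring.
  by rewrite e; ring.
by right; right; split=> //; exists (z - d); ring.
Qed.

Lemma ext_chain_lattice i : Iset i -> is_lattice D (ext_chain i).
Proof.
case/Iset_cases=> [Ji|[[z ->]|[nsd [z ->]]]].
- exact: lattice_same (same_sym (ext_chain_J Ji)) (M_lattice Ji).
- exact: lattice_same (same_sym (ext_chain_c z)) (lattice_pscale z P_lattice).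
- exact: lattice_same (same_sym (ext_chain_cdual z nsd)) (lattice_pscale z Pd_lattice).
Qed.

Lemma ext_chain_per i : Iset i -> same (ext_chain (i + m2)) (fun x => ext_chain i (pi *: x)).
Proof.
case/Iset_cases=> [Ji|[[z ->]|[nsd [z ->]]]].
- apply: same_trans (ext_chain_J ((J_per i).1 Ji)) _.
  by apply: same_trans (M_per Ji) _ => x; apply: iff_sym; apply: ext_chain_J.
- rewrite (_ : c + m2 * z + m2 = c + m2 * (z + 1)); last by ring.
  apply: same_trans (ext_chain_c _) _; apply: same_trans (pscaleS D _ _) _.
  by move=> x; apply: iff_sym; apply: ext_chain_c.
- rewrite (_ : - c + m2 * d + m2 * z + m2 = - c + m2 * d + m2 * (z + 1)); last by ring.
  apply: same_trans (ext_chain_cdual _ nsd) _; apply: same_trans (pscaleS D _ _) _.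
  by move=> x; apply: iff_sym; apply: ext_chain_cdual.
Qed.

Lemma ext_chain_dual i : Iset i -> same (perp (ext_chain i)) (ext_chain (- i + m2 * d)).
Proof.
case/Iset_cases=> [Ji|[[z ->]|[nsd [z ->]]]].
- apply: same_trans (perp_same D S (ext_chain_J Ji)) _.
  exact: same_trans (M_dual Ji) (same_sym (ext_chain_J (J_reflect d Ji))).
- apply: same_trans (perp_same D S (ext_chain_c z)) _.
  apply: same_trans (perp_pscale D S _ _) _.
  rewrite (_ : - (c + m2 * z) + m2 * d = - c + m2 * d + m2 * (- z)); last by ring.
  have [[w e]|nsd] := classic c_selfdual; last exact: same_sym (ext_chain_cdual _ nsd).
  rewrite e (_ : c + m2 * w + m2 * - z = c + m2 * (w - z)); last by ring.
  apply: same_trans (pscale_same D _ (Pd_selfdual e)) _.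
  exact: same_trans (pscaleD D _ _ _) (same_sym (ext_chain_c _)).
- apply: same_trans (perp_same D S (ext_chain_cdual z nsd)) _.
  apply: same_trans (perp_pscale D S _ _) _.
  rewrite (_ : - (- c + m2 * d + m2 * z) + m2 * d = c + m2 * (- z)); last by ring.
  exact: same_trans (pscale_same D _ Pd_perp) (same_sym (ext_chain_c _)).
Qed.

Lemma ext_chain_consecutive_J i i' : J i -> Iset i' -> i < i' -> consecutive i i' ->
  has_length D (ext_chain i) (ext_chain i') `|i' - i|%N.
Proof.
move=> Ji Ii' lt_ii' cons; have prev := consecutive_prev cons.
apply: has_length_same (same_sym (ext_chain_J Ji)) (same_refl _) _.
case/Iset_cases: Ii' lt_ii' prev => [Ji'|[[z ->]|[nsd [z ->]]]] lt_ii' prev.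
- exact: has_length_same (same_refl _) (same_sym (ext_chain_J Ji')) (M_chain Ji Ji' lt_ii').2.
- have Jkz : J (k + m2 * z) := (J_shift k z).1 Jk.
  have ei : i = k + m2 * z by have := prev _ (or_introl Jkz) (_ : _ < _); lia.
  rewrite ei (_ : `|_|%N = 1%N); last by lia.
  apply: has_length_same (same_sym (M_shift z Jk)) (same_sym (ext_chain_c z)) _.
  exact: (has_length_pscale z length_Mk_P).
- have Jlz : J (- l + m2 * d + m2 * z) := (J_shift _ z).1 Jld.
  have Jiz : J (- i + m2 * d + m2 * z) by rewrite -addrA -mulrDr; apply: J_reflect.
  have le_li := l_min Jiz (_ : _ < _); have le_il := prev _ (or_introl Jlz) (_ : _ < _).
  have ei : i = - l + m2 * d + m2 * z by move: le_li le_il lt_ii'; have := lt_k1_l; lia.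
  rewrite ei (_ : `|_|%N = `|l - k|.-1); last by have := lt_k1_l; lia.
  apply: has_length_same (same_sym (M_shift z Jld)) (same_sym (ext_chain_cdual z nsd)) _.
  exact: (has_length_pscale z length_Mld_Pd).
Qed.

Lemma ext_chain_consecutive_c z i' : Iset i' -> c + m2 * z < i' -> consecutive (c + m2 * z) i' ->
  has_length D (ext_chain (c + m2 * z)) (ext_chain i') `|i' - (c + m2 * z)%R|%N.
Proof.
move=> Ii' lt_ci' cons; have next := consecutive_next cons; have prev := consecutive_prev cons.
apply: has_length_same (same_sym (ext_chain_c z)) (same_refl _) _.
have Jlz : J (l + m2 * z) := (J_shift l z).1 Jl.
have le_i'l : i' <= l + m2 * z by apply: next (or_introl Jlz) _; have := lt_k1_l; lia.
case/Iset_cases: Ii' lt_ci' le_i'l prev => [Ji'|[[z' ->]|[nsd [z' ->]]]] lt_ci' le_i'l prev.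
- have ei' : i' = l + m2 * z.
    have Ji'z : J (i' + m2 * (- z)) := (J_shift _ _).1 Ji'.
    by have := l_min Ji'z (_ : _ < _); move: lt_ci' le_i'l; rewrite mulrN; lia.
  rewrite ei' (_ : `|_|%N = `|l - k|.-1); last by have := lt_k1_l; lia.
  apply: has_length_same (same_refl _) (same_sym (ext_chain_J Jlz)) _.
  apply: has_length_same (same_refl _) (same_sym (M_shift z Jl)) _.
  exact: (has_length_pscale z length_P_Ml).
- exfalso; have Jkz' : J (k + m2 * z') := (J_shift k z').1 Jk.
  have le_kz := prev _ (or_introl Jkz') (_ : _ < _).
  have ekz : c + m2 * z = k + m2 * z' by move: lt_ci' le_kz; lia.
  by move: Jkz'; rewrite -ekz; apply: notJ_k1.
(* Both new lattices lie in the gap [(k, l)] of [J]; then [l] is the reflection of [k]. *)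
- have Jlz' : J (- l + m2 * d + m2 * z') := (J_shift _ z').1 Jld.
  have le_lz' := prev _ (or_introl Jlz') (_ : _ < _).
  have ne_lz' : - l + m2 * d + m2 * z' != c + m2 * z.
    by apply/eqP => e; move: Jlz'; rewrite e; apply: notJ_k1.
  have ne_i'l : - c + m2 * d + m2 * z' != l + m2 * z.
    by apply/eqP => e; move: Jlz; rewrite -e -addrA -mulrDr; apply: notJ_k1_reflect.
  pose w := z' - z; have Jkw : J (- k + m2 * d + m2 * w) := (J_shift _ w).1 Jkd.
  have ew : - k + m2 * d + m2 * w = l.
    have := l_min Jkw (_ : _ < _); move: lt_ci' le_i'l ne_i'l le_lz' ne_lz'; rewrite /w mulrBr; lia.
  have Ml : same (M l) (pscale D w Mkd) by rewrite -ew; apply: M_shift Jkd.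
  have PPd : lsubset P (pscale D w Pd) by apply: P_pscale_Pd => x /PMl /(Ml x).
  have len : has_length D P (pscale D w Pd) `|l - k|.-1.-1.
    apply: has_length_cancelr (has_length_same (same_refl _) Ml length_P_Ml) _ _ PPd.
      exact: Osubmod_pscale (Osubmod_perp D S P).
    exact: simple_step_pscale simple_step_Pd.
  rewrite (_ : `|_|%N = `|l - k|.-1.-1); last by move: ew; rewrite /w mulrBr; lia.
  apply: has_length_same (same_refl _) (same_sym (ext_chain_cdual z' nsd)) _.
  have -> : z' = w + z by rewrite /w subrK.
  exact: has_length_same (same_refl _) (pscaleD D _ _ _) (has_length_pscale z len).
Qed.

Lemma ext_chain_consecutive_cdual z i' : ~ c_selfdual -> Iset i' ->
  - c + m2 * d + m2 * z < i' -> consecutive (- c + m2 * d + m2 * z) i' ->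
  has_length D (ext_chain (- c + m2 * d + m2 * z)) (ext_chain i')
    `|i' - (- c + m2 * d + m2 * z)%R|%N.
Proof.
move=> nsd Ii' lt_ci' cons; have Jkz : J (- k + m2 * d + m2 * z) := (J_shift _ z).1 Jkd.
have ei' : i' = - k + m2 * d + m2 * z.
  by have := consecutive_next cons (or_introl Jkz) (_ : _ < _); move: lt_ci'; lia.
rewrite ei' (_ : `|_|%N = 1%N); last by lia.
apply: has_length_same (same_sym (ext_chain_cdual z nsd)) (same_sym (ext_chain_J Jkz)) _.
apply: has_length_same (same_refl _) (same_sym (M_shift z Jkd)) _.
exact: (has_length_pscale z length_Pd_Mkd).
Qed.

Lemma ext_chain_consecutive i i' : Iset i -> Iset i' -> i < i' -> consecutive i i' ->
  has_length D (ext_chain i) (ext_chain i') `|i' - i|%N.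
Proof.
case/Iset_cases=> [Ji|[[z ->]|[nsd [z ->]]]].
- exact: ext_chain_consecutive_J.
- exact: ext_chain_consecutive_c.
- exact: ext_chain_consecutive_cdual.
Qed.

Lemma ext_chain_fibre : exists M', fibre M' /\ same (M' c) P.
Proof.
exists ext_chain; split.
  split; last exact: ext_chain_J.
  split; [exact: ext_chain_lattice| |exact: ext_chain_per|by exists d; apply: ext_chain_dual].
  move=> i i' Ii Ii' lt_ii'.
  have len := chain_of_consecutive ext_chain_consecutive Ii Ii' lt_ii'.
  by split; first exact: has_length_lsubset len.
have := ext_chain_c 0; rewrite mulr0 addr0 => ext_c.
exact: same_trans ext_c (pscale0 D P).
Qed.

End Extension.

End Fibre.

Theorem lemma2p3 (L : fieldType) (D : dvr L) (N : vectType L)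
  (S : symplectic N) (n : nat) (hn : (0 < n)%N)
  (hdim : \dim (fullv : {vspace N}) = (2 * n)%N)
  (J : int -> Prop) (hJne : exists i, J i)
  (hJper : forall i, J i <-> J (i + (2 * n)%N%:Z))
  (hJsym : forall i, J i <-> J (- i))
  (k : int) (hk : J k) (hk1 : ~ J (k + 1))
  (l : int) (hl : J l) (hkl : k < l) (hlmin : forall j, J j -> k < j -> l <= j)
  (M : int -> N -> Prop) (hM : selfdual_chain D S n J M) :
  let I := fun i : int => J i \/ (i = k + 1 %[mod (2 * n)%N%:Z])%Z
                              \/ (i = - (k + 1) %[mod (2 * n)%N%:Z])%Z in
  let fiber := fun M' : int -> N -> Prop =>
    selfdual_chain D S n I M' /\ forall i, J i -> same (M' i) (M i) in
  let target := fun P : N -> Prop =>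
    [/\ is_lattice D P, lsubset (M k) P, lsubset P (M l) & dim1 D (M k) P] in
  [/\ (forall M', fiber M' -> target (M' (k + 1))),
      (forall M' M'', fiber M' -> fiber M'' ->
          same (M' (k + 1)) (M'' (k + 1)) ->
          forall i, I i -> same (M' i) (M'' i))
    & (forall P, target P -> exists M', fiber M' /\ same (M' (k + 1)) P)].
Proof.
move=> I fiber target; rewrite {}/fiber {}/target {}/I.
case: hM => M_lattice M_chain M_per [d M_dual].
split.
- exact: (fibre_target hn hk hk1 hl hkl).
- exact: (fibre_unique hn hJper hJsym hk hkl M_chain M_dual).
- move=> P [P_lattice MkP PMl [piP [x0 [Px0 nMx0 genP]]]].
  have piP' y : P y -> M k (dvr_pi D *: y) by move=> Py; apply: piP; exists y.
  exact: (ext_chain_fibre hn hJper hJsym hk hk1 hl hkl hlmin M_lattice M_chain M_per M_dual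
    P_lattice MkP PMl Px0 nMx0 genP piP').
Qed.
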